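(* Suppose Assumptions (A), (B) and (C) hold, let $t\in(0,1/L_f]$ and $s\in\left(0,\frac{2}{L_\omega+\sigma}\right]$, and let $\{\mathbf x^k\}$ be generated by BiG-SAM from any $\mathbf x^0\in\mathbb R^n$. Then $\{\mathbf x^k\}$ converges to a point $\mathbf x^*\in X^*$ satisfying $\langle\nabla\omega(\mathbf x^* ),\mathbf x-\mathbf x^*\rangle\ge 0$ for all $\mathbf x\in X^*$; consequently $\mathbf x^*=\mathbf x^*_{mn}$, the unique minimizer of $\omega$ over $X^*$.
   Context: Assumption (A): $f:\mathbb R^n\to\mathbb R$ is convex and continuously differentiable with $L_f$-Lipschitz gradient; $g:\mathbb R^n\to(-\infty,\infty]$ is proper, lower semicontinuous and convex; the set $X^*$ of minimizers of $\varphi=f+g$ over $\mathbb R^n$ is nonempty. Assumption (B): $\omega:\mathbb R^n\to\mathbb R$ is $\sigma$-strongly convex ($\sigma>0$) and continuously differentiable with $L_\omega$-Lipschitz gradient. Assumption (C): $\{\alpha_k\}_{k\ge1}\subset(0,1]$, $\lim_k\alpha_k=0$, $\sum_k\alpha_k=\infty$, $\lim_k\alpha_{k+1}/\alpha_k=1$. For a proper lsc convex $h$, $\operatorname{prox}_h(\mathbf x)=\arg\min_{\mathbf u}\{h(\mathbf u)+\frac12\|\mathbf u-\mathbf x\|^2\}$. BiG-SAM: for $k=1,2,\dots$ set $\mathbf y^k=\operatorname{prox}_{tg}(\mathbf x^{k-1}-t\nabla f(\mathbf x^{k-1}))$, $\mathbf z^k=\mathbf x^{k-1}-s\nabla\omega(\mathbf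 x^{k-1})$, $\mathbf x^k=\alpha_k\mathbf z^k+(1-\alpha_k)\mathbf y^k$. *)

From Stdlib Require Import Reals Lra Lia.
From Stdlib Require Vectors.Fin.
Open Scope R_scope.

Definition Vec (n : nat) : Type := Fin.t n -> R.

Definition vadd {n} (u v : Vec n) : Vec n := fun i => u i + v i.
Definition vsub {n} (u v : Vec n) : Vec n := fun i => u i - v i.
Definition vscale {n} (a : R) (u : Vec n) : Vec n := fun i => a * u i.

Fixpoint dot (n : nat) : Vec n -> Vec n -> R :=
  match n return Vec n -> Vec n -> R with
  | O => fun _ _ => 0
  | S m => fun u v => u Fin.F1 * v Fin.F1
                      + dot m (fun i => u (Fin.FS i)) (fun i => v (Fin.FS i))
  end.
Arguments dot {n} u v.

Definition norm {n} (u : Vec n) : R := sqrt (dot u u).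

Definition convex {n} (h : Vec n -> R) : Prop :=
  forall x y l, 0 <= l <= 1 ->
    h (vadd (vscale l x) (vscale (1 - l) y)) <= l * h x + (1 - l) * h y.

Definition strongly_convex {n} (sigma : R) (h : Vec n -> R) : Prop :=
  forall x y l, 0 <= l <= 1 ->
    h (vadd (vscale l x) (vscale (1 - l) y))
    <= l * h x + (1 - l) * h y - sigma / 2 * l * (1 - l) * (norm (vsub x y))^2.

Definition is_gradient {n} (h : Vec n -> R) (gh : Vec n -> Vec n) : Prop :=
  forall x eps, 0 < eps -> exists delta, 0 < delta /\
    forall d, norm d < delta ->
      Rabs (h (vadd x d) - h x - dot (gh x) d) <= eps * norm d.

Definition lipschitz {n} (L : R) (F : Vec n -> Vec n) : Prop :=
  0 <= L /\ forall x y, norm (vsub (F x) (F y)) <= L * norm (vsub x y).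

Inductive ER : Type := ERfin (r : R) | PInf.

Definition ER_le (a b : ER) : Prop :=
  match a, b with
  | _, PInf => True
  | PInf, ERfin _ => False
  | ERfin x, ERfin y => x <= y
  end.

Definition ER_lt (a b : ER) : Prop :=
  match a, b with
  | ERfin x, PInf => True
  | PInf, _ => False
  | ERfin x, ERfin y => x < y
  end.

Definition ER_addr (e : ER) (r : R) : ER :=
  match e with ERfin x => ERfin (x + r) | PInf => PInf end.

(** a * e for a > 0 *)
Definition ER_scale (a : R) (e : ER) : ER :=
  match e with ERfin x => ERfin (a * x) | PInf => PInf end.

(** convex combination l*a + (1-l)*b, used only for 0 < l < 1 *)
Definition ER_comb (l : R) (a b : ER) : ER :=
  match a, b with
  | ERfin x, ERfin y => ERfin (l * x + (1 - l) * y)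
  | _, _ => PInf
  end.

Definition proper {n} (g : Vec n -> ER) : Prop :=
  exists x r, g x = ERfin r.

Definition lsc {n} (g : Vec n -> ER) : Prop :=
  forall x a, ER_lt (ERfin a) (g x) ->
    exists delta, 0 < delta /\
      forall y, norm (vsub y x) < delta -> ER_lt (ERfin a) (g y).

Definition ext_convex {n} (g : Vec n -> ER) : Prop :=
  forall x y l, 0 < l < 1 ->
    ER_le (g (vadd (vscale l x) (vscale (1 - l) y))) (ER_comb l (g x) (g y)).

Definition is_prox {n} (t : R) (g : Vec n -> ER) (x p : Vec n) : Prop :=
  forall u,
    ER_le (ER_addr (ER_scale t (g p)) (/ 2 * (norm (vsub p x))^2))
          (ER_addr (ER_scale t (g u)) (/ 2 * (norm (vsub u x))^2)).

Definition phi {n} (f : Vec n -> R) (g : Vec n -> ER) (x : Vec n) : ER :=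
  ER_addr (g x) (f x).

Definition in_Xstar {n} (f : Vec n -> R) (g : Vec n -> ER) (x : Vec n) : Prop :=
  forall y, ER_le (phi f g x) (phi f g y).

Definition vconverges {n} (u : nat -> Vec n) (l : Vec n) : Prop :=
  forall eps, 0 < eps -> exists N, forall k, (N <= k)%nat -> norm (vsub (u k) l) < eps.

(* BiG-SAM is the viscosity iteration x^k = a_k S x^(k-1) + (1 - a_k) T x^(k-1), with
   T = prox_(tg) o (I - t grad f) nonexpansive with fixed-point set X*, and S = I - s grad omega
   a contraction. The iterates stay in a ball around X*. Xu's lemma applied to
   |x^(k+1) - x^k| (this is where a_(k+1) / a_k -> 1 enters) gives asymptotic regularity, so
   x^k - T x^k -> 0 and, T being demiclosed, all cluster points lie in X*. The minimizer xs of
   omega over X* satisfies <grad omega xs, u - xs> >= 0 on X*; this forces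
   liminf <grad omega xs, x^k - xs> >= 0, and Xu's lemma applied to |x^k - xs|^2 yields
   x^k -> xs. *)

From Stdlib Require Import Reals Lra Lia Psatz FunctionalExtensionality Classical ClassicalEpsilon.
Open Scope R_scope.

Lemma vec_ext {n} (u v : Vec n) : (forall i, u i = v i) -> u = v.
Proof. intros; apply functional_extensionality; auto. Qed.

Ltac vec_ring := apply vec_ext; intro; unfold vadd, vsub, vscale; ring.

Lemma dot_comm n (u v : Vec n) : dot u v = dot v u.
Proof. revert u v; induction n; intros; simpl; [reflexivity|]. rewrite IHn; ring. Qed.

Lemma dot_linear_l n (a b : R) (u v w : Vec n) :
  dot (fun i => a * u i + b * v i) w = a * dot u w + b * dot v w.
Proof.
  revert u v w; induction n; intros; simpl; [ring|].
  specialize (IHn (fun i => u (Fin.FS i)) (fun i => v (Fin.FS i)) (fun i => w (Fin.FS i))).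
  cbv beta in IHn. rewrite IHn. ring.
Qed.

Lemma dot_addl n (u v w : Vec n) : dot (vadd u v) w = dot u w + dot v w.
Proof.
  replace (vadd u v) with (fun i => 1 * u i + 1 * v i) by vec_ring.
  rewrite dot_linear_l; ring.
Qed.

Lemma dot_subl n (u v w : Vec n) : dot (vsub u v) w = dot u w - dot v w.
Proof.
  replace (vsub u v) with (fun i => 1 * u i + (-1) * v i) by vec_ring.
  rewrite dot_linear_l; ring.
Qed.

Lemma dot_scalel n a (u w : Vec n) : dot (vscale a u) w = a * dot u w.
Proof.
  replace (vscale a u) with (fun i => a * u i + 0 * u i) by vec_ring.
  rewrite dot_linear_l; ring.
Qed.

Lemma dot_addr n (u v w : Vec n) : dot w (vadd u v) = dot w u + dot w v.
Proof. rewrite !(dot_comm n w). apply dot_addl. Qed.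

Lemma dot_subr n (u v w : Vec n) : dot w (vsub u v) = dot w u - dot w v.
Proof. rewrite !(dot_comm n w). apply dot_subl. Qed.

Lemma dot_scaler n a (u w : Vec n) : dot w (vscale a u) = a * dot w u.
Proof. rewrite !(dot_comm n w). apply dot_scalel. Qed.

Lemma dot_self_ge0 n (u : Vec n) : 0 <= dot u u.
Proof.
  revert u; induction n; intros; simpl; [lra|].
  specialize (IHn (fun i => u (Fin.FS i))). nra.
Qed.

Lemma dot_self_eq0 n (u : Vec n) : dot u u = 0 -> forall i, u i = 0.
Proof.
  revert u; induction n; intros u H i; [inversion i|].
  simpl in H. pose proof (dot_self_ge0 n (fun i => u (Fin.FS i))).
  assert (u Fin.F1 = 0) by nra.
  assert (dot (fun i => u (Fin.FS i)) (fun i => u (Fin.FS i)) = 0) by nra.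
  revert u H H0 H1 H2. pattern i. apply Fin.caseS'; intros; auto.
  apply (IHn (fun i => u (Fin.FS i)) H2).
Qed.

Lemma dot_self_eq0_r n (u v : Vec n) : dot v v = 0 -> dot u v = 0.
Proof.
  intros H. replace v with (fun _ : Fin.t n => 0).
  - clear. induction n; simpl; [reflexivity|]. rewrite IHn; ring.
  - apply vec_ext; intros; symmetry; apply dot_self_eq0; auto.
Qed.

Lemma cauchy_schwarz_sq n (u v : Vec n) : (dot u v)^2 <= dot u u * dot v v.
Proof.
  pose proof (dot_self_ge0 n u). pose proof (dot_self_ge0 n v).
  destruct (Req_dec (dot v v) 0) as [E|E].
  - rewrite (dot_self_eq0_r n u v E). nra.
  - set (l := dot u v / dot v v).
    pose proof (dot_self_ge0 n (vsub u (vscale l v))) as Hl.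
    rewrite dot_subl, !dot_subr, !dot_scalel, !dot_scaler, (dot_comm n v u) in Hl.
    assert (l * dot v v = dot u v) by (unfold l; field; auto).
    nra.
Qed.

Lemma norm_ge0 n (u : Vec n) : 0 <= norm u.
Proof. apply sqrt_pos. Qed.

Lemma norm_pow2 n (u : Vec n) : norm u ^ 2 = dot u u.
Proof. unfold norm. rewrite <- Rsqr_pow2. apply Rsqr_sqrt, dot_self_ge0. Qed.

Lemma Rabs_le_of_pow2 a c : 0 <= c -> a ^ 2 <= c ^ 2 -> Rabs a <= c.
Proof. intros. unfold Rabs; destruct Rcase_abs; nra. Qed.

Lemma cauchy_schwarz n (u v : Vec n) : Rabs (dot u v) <= norm u * norm v.
Proof.
  apply Rabs_le_of_pow2; [apply Rmult_le_pos; apply norm_ge0|].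
  pose proof (norm_pow2 n u); pose proof (norm_pow2 n v); pose proof (cauchy_schwarz_sq n u v).
  nra.
Qed.

Lemma dot_le_norm n (u v : Vec n) : dot u v <= norm u * norm v.
Proof. pose proof (cauchy_schwarz n u v); pose proof (Rle_abs (dot u v)); lra. Qed.

Lemma dot_ge_norm n (u v : Vec n) : - (norm u * norm v) <= dot u v.
Proof.
  pose proof (cauchy_schwarz n u v); pose proof (Rle_abs (- dot u v)).
  rewrite Rabs_Ropp in *; lra.
Qed.

Lemma norm_le_of_dot n (u : Vec n) c : 0 <= c -> dot u u <= c ^ 2 -> norm u <= c.
Proof. intros. unfold norm. rewrite <- (sqrt_pow2 c H). apply sqrt_le_1_alt. lra. Qed.

Lemma norm_lt_of_dot n (u : Vec n) c : 0 <= c -> dot u u < c ^ 2 -> norm u < c.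
Proof.
  intros. unfold norm. rewrite <- (sqrt_pow2 c H).
  apply sqrt_lt_1_alt. split; [apply dot_self_ge0|lra].
Qed.

Lemma normZ n a (u : Vec n) : norm (vscale a u) = Rabs a * norm u.
Proof.
  unfold norm. rewrite dot_scalel, dot_scaler, <- Rmult_assoc.
  rewrite sqrt_mult_alt by nra. rewrite <- sqrt_Rsqr_abs. reflexivity.
Qed.

Lemma dot_self_add n (u v : Vec n) : dot (vadd u v) (vadd u v) = dot u u + 2 * dot u v + dot v v.
Proof. rewrite dot_addl, !dot_addr, (dot_comm n v u). ring. Qed.

Lemma dot_self_sub n (u v : Vec n) : dot (vsub u v) (vsub u v) = dot u u - 2 * dot u v + dot v v.
Proof. rewrite dot_subl, !dot_subr, (dot_comm n v u). ring. Qed.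

Lemma norm_triangle n (u v : Vec n) : norm (vadd u v) <= norm u + norm v.
Proof.
  apply norm_le_of_dot; [pose proof (norm_ge0 n u); pose proof (norm_ge0 n v); lra|].
  rewrite dot_self_add. pose proof (dot_le_norm n u v).
  pose proof (norm_pow2 n u); pose proof (norm_pow2 n v). nra.
Qed.

Lemma norm_comb n a b (u v : Vec n) : 0 <= a -> 0 <= b ->
  norm (vadd (vscale a u) (vscale b v)) <= a * norm u + b * norm v.
Proof.
  intros. eapply Rle_trans; [apply norm_triangle|].
  rewrite !normZ, !Rabs_pos_eq by auto. lra.
Qed.

Lemma dist_comm n (u v : Vec n) : norm (vsub u v) = norm (vsub v u).
Proof. unfold norm. rewrite !dot_self_sub, (dot_comm n u v). f_equal; ring. Qed.

Lemma dist_triangle n (u v w : Vec n) : norm (vsub u w) <= norm (vsub u v) + norm (vsub v w).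
Proof. replace (vsub u w) with (vadd (vsub u v) (vsub v w)) by vec_ring. apply norm_triangle. Qed.

Lemma dist_self n (u : Vec n) : norm (vsub u u) = 0.
Proof. unfold norm. rewrite dot_self_sub, <- sqrt_0. f_equal. ring. Qed.

Lemma le_of_le_add_eps a b c : 0 <= c -> (forall eps, 0 < eps -> a <= b + eps * c) -> a <= b.
Proof.
  intros Hc H. destruct (Rle_dec a b) as [|Hn]; auto. exfalso.
  assert (He : 0 < (a - b) / (2 * (c + 1))) by (apply Rdiv_lt_0_compat; lra).
  specialize (H _ He).
  assert ((a - b) / (2 * (c + 1)) * c < a - b).
  { apply Rmult_lt_reg_r with (2 * (c + 1)); [lra|]. field_simplify; [|lra]. nra. }
  lra.
Qed.

Lemma le_of_le_add_small a b c : 0 <= c -> (forall l, 0 < l < 1 -> a <= b + l * c) -> a <= b.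
Proof.
  intros Hc H. apply le_of_le_add_eps with c; auto. intros eps He.
  set (l := Rmin eps (1/2)).
  assert (0 < l) by (unfold l; apply Rmin_pos; lra).
  assert (l <= eps) by apply Rmin_l. assert (l <= 1/2) by apply Rmin_r.
  specialize (H l ltac:(lra)). nra.
Qed.

Lemma strongly_convex_gradient n sigma (h : Vec n -> R) gh :
  0 <= sigma -> strongly_convex sigma h -> is_gradient h gh ->
  forall x y, h x + dot (gh x) (vsub y x) + sigma / 2 * dot (vsub y x) (vsub y x) <= h y.
Proof.
  intros Hs Hc Hg x y. set (d := vsub y x).
  pose proof (norm_ge0 n d) as Hd0. pose proof (norm_pow2 n d) as Hnd.
  pose proof (dot_self_ge0 n d) as Hdd.
  cut (dot (gh x) d <= h y - h x - sigma / 2 * dot d d); [lra|].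
  apply le_of_le_add_eps with (c := sigma / 2 * dot d d + norm d); [nra|].
  intros eps Heps.
  destruct (Hg x eps Heps) as [delta [Hdel Hd]].
  (* step from x towards y by tau, short enough for the first-order estimate at x *)
  set (tau := Rmin eps (Rmin 1 (delta / (2 * (norm d + 1))))).
  assert (Ht1 : 0 < tau).
  { unfold tau. repeat apply Rmin_pos; try lra. apply Rdiv_lt_0_compat; lra. }
  assert (Ht2 : tau <= 1) by (unfold tau; eapply Rle_trans; [apply Rmin_r|apply Rmin_l]).
  assert (Ht3 : tau <= eps) by (unfold tau; apply Rmin_l).
  assert (Ht4 : tau <= delta / (2 * (norm d + 1)))
    by (unfold tau; eapply Rle_trans; [apply Rmin_r|apply Rmin_r]).
  assert (Hn : norm (vscale tau d) < delta).
  { rewrite normZ, Rabs_pos_eq by lra.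
    assert (tau * norm d <= delta / (2 * (norm d + 1)) * norm d) by (apply Rmult_le_compat_r; lra).
    assert (delta / (2 * (norm d + 1)) * norm d < delta).
    { apply Rmult_lt_reg_r with (2 * (norm d + 1)); [lra|]. field_simplify; nra. }
    lra. }
  specialize (Hd _ Hn). rewrite normZ, (Rabs_pos_eq tau), dot_scaler in Hd by lra.
  specialize (Hc y x tau (conj (Rlt_le _ _ Ht1) Ht2)).
  replace (vadd (vscale tau y) (vscale (1 - tau) x)) with (vadd x (vscale tau d)) in Hc
    by (unfold d; vec_ring).
  fold d in Hc. rewrite Hnd in Hc.
  pose proof (Rle_abs (- (h (vadd x (vscale tau d)) - h x - tau * dot (gh x) d))) as Ha.
  rewrite Rabs_Ropp in Ha.
  apply Rmult_le_reg_l with tau; [lra|].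
  assert (sigma / 2 * tau * tau * dot d d <= sigma / 2 * tau * eps * dot d d).
  { apply Rmult_le_compat_r; [lra|]. apply Rmult_le_compat_l; nra. }
  nra.
Qed.

Lemma convex_strongly_convex0 n (h : Vec n -> R) : convex h -> strongly_convex 0 h.
Proof. intros H x y l Hl. specialize (H x y l Hl). lra. Qed.

Lemma strongly_convex_convex n sigma (h : Vec n -> R) :
  0 <= sigma -> strongly_convex sigma h -> convex h.
Proof.
  intros Hs H x y l Hl. specialize (H x y l Hl).
  pose proof (norm_ge0 n (vsub x y)).
  assert (0 <= sigma / 2 * l * (1 - l) * norm (vsub x y) ^ 2) by (repeat apply Rmult_le_pos; lra).
  lra.
Qed.

Lemma convex_gradient n (h : Vec n -> R) gh :
  convex h -> is_gradient h gh -> forall x y, h x + dot (gh x) (vsub y x) <= h y.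
Proof.
  intros Hc Hg x y.
  pose proof (strongly_convex_gradient n 0 h gh (Rle_refl 0) (convex_strongly_convex0 n h Hc) Hg x y).
  lra.
Qed.

Lemma is_gradient_line n (h : Vec n -> R) gh : is_gradient h gh ->
  forall x d tau, derivable_pt_lim (fun s => h (vadd x (vscale s d))) tau
                    (dot (gh (vadd x (vscale tau d))) d).
Proof.
  intros Hg x d tau eps Heps.
  set (p := vadd x (vscale tau d)).
  pose proof (norm_ge0 n d) as Hd0.
  assert (He' : 0 < eps / 2 / (norm d + 1)) by (apply Rdiv_lt_0_compat; lra).
  destruct (Hg p _ He') as [delta [Hdel Hd]].
  assert (Hdp : 0 < delta / (norm d + 1)) by (apply Rdiv_lt_0_compat; lra).
  exists (mkposreal _ Hdp). simpl. intros hh Hh0 Hhl.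
  assert (Hn : norm (vscale hh d) < delta).
  { rewrite normZ.
    assert (Rabs hh * norm d <= delta / (norm d + 1) * norm d) by (apply Rmult_le_compat_r; lra).
    assert (delta / (norm d + 1) * norm d < delta).
    { apply Rmult_lt_reg_r with (norm d + 1); [lra|]. field_simplify; nra. }
    lra. }
  specialize (Hd _ Hn). rewrite normZ, dot_scaler in Hd.
  replace (vadd x (vscale (tau + hh) d)) with (vadd p (vscale hh d)) by (unfold p; vec_ring).
  fold p.
  replace ((h (vadd p (vscale hh d)) - h p) / hh - dot (gh p) d)
    with ((h (vadd p (vscale hh d)) - h p - hh * dot (gh p) d) / hh) by (field; auto).
  unfold Rdiv at 1. rewrite Rabs_mult, Rabs_inv.
  assert (0 < Rabs hh) by (apply Rabs_pos_lt; auto).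
  apply Rmult_lt_reg_r with (Rabs hh); auto.
  rewrite Rmult_assoc, Rinv_l by lra.
  assert (eps / 2 / (norm d + 1) * (Rabs hh * norm d) < eps * Rabs hh).
  { replace (eps / 2 / (norm d + 1) * (Rabs hh * norm d))
      with ((eps * Rabs hh) * (norm d / (2 * (norm d + 1)))) by (field; lra).
    assert (norm d / (2 * (norm d + 1)) < 1).
    { apply Rmult_lt_reg_r with (2 * (norm d + 1)); [lra|]. field_simplify; lra. }
    assert (0 <= norm d / (2 * (norm d + 1)))
      by (apply Rmult_le_pos; [lra|left; apply Rinv_0_lt_compat; lra]).
    assert (0 < eps * Rabs hh) by nra.
    nra. }
  lra.
Qed.

Lemma derivable_pt_lim_quadratic a b tau :
  derivable_pt_lim (fun s => a * s + b * s ^ 2) tau (a + 2 * b * tau).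
Proof.
  pose proof (derivable_pt_lim_plus (mult_real_fct a id) (mult_real_fct b (fun y => y ^ 2)) tau
      _ _ (derivable_pt_lim_scal _ a tau _ (derivable_pt_lim_id tau))
          (derivable_pt_lim_scal _ b tau _ (derivable_pt_lim_pow tau 2))) as H.
  unfold plus_fct, mult_real_fct, id in H. simpl in H.
  replace (a + 2 * b * tau) with (a * 1 + b * ((1 + 1) * (tau * 1))) by ring. exact H.
Qed.

Lemma descent_lemma n (h : Vec n -> R) gh L : is_gradient h gh -> lipschitz L gh ->
  forall x y, h y <= h x + dot (gh x) (vsub y x) + L / 2 * dot (vsub y x) (vsub y x).
Proof.
  intros Hg [HL Hl] x y. set (d := vsub y x).
  (* mean value theorem for h along [x, y] minus its quadratic upper model *)
  set (q := fun s => h (vadd x (vscale s d)) - (dot (gh x) d * s + (L / 2 * dot d d) * s ^ 2)).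
  set (q' := fun s => dot (gh (vadd x (vscale s d))) d - (dot (gh x) d + 2 * (L / 2 * dot d d) * s)).
  assert (Hq : forall s, derivable_pt_lim q s (q' s)).
  { intros s. apply derivable_pt_lim_minus; [apply is_gradient_line; auto|].
    apply derivable_pt_lim_quadratic. }
  set (pr := fun s => exist (fun l => derivable_pt_abs q s l) (q' s) (Hq s) : derivable_pt q s).
  destruct (MVT_cor1 q 0 1 pr Rlt_0_1) as [c [Hc Hc01]]. simpl in Hc.
  assert (E0 : vadd x (vscale 0 d) = x) by vec_ring.
  assert (E1 : vadd x (vscale 1 d) = y) by (unfold d; vec_ring).
  unfold q in Hc. rewrite E0, E1 in Hc.
  assert (q' c <= 0).
  { unfold q'. set (pc := vadd x (vscale c d)).
    pose proof (dot_le_norm n (vsub (gh pc) (gh x)) d) as Hcs. rewrite dot_subl in Hcs.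
    pose proof (Hl pc x) as Hlip.
    replace (vsub pc x) with (vscale c d) in Hlip by (unfold pc; vec_ring).
    rewrite normZ, Rabs_pos_eq in Hlip by lra.
    pose proof (norm_ge0 n d). pose proof (norm_ge0 n (vsub (gh pc) (gh x))).
    pose proof (norm_pow2 n d).
    assert (norm (vsub (gh pc) (gh x)) * norm d <= L * (c * norm d) * norm d)
      by (apply Rmult_le_compat_r; lra).
    nra. }
  fold d. simpl in Hc. nra.
Qed.

Lemma gradient_gap_lower_bound n (h : Vec n -> R) gh L :
  convex h -> is_gradient h gh -> lipschitz L gh -> 0 < L ->
  forall x y, dot (vsub (gh y) (gh x)) (vsub (gh y) (gh x)) / (2 * L)
              <= h y - h x - dot (gh x) (vsub y x).
Proof.
  intros Hc Hg Hl HL x y. set (D := vsub (gh y) (gh x)). set (k := - / L).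
  (* compare h at the gradient step w = y - D / L from y with the tangent plane at x *)
  set (w := vsub y (vscale (/ L) D)).
  pose proof (convex_gradient n h gh Hc Hg x w) as H1.
  pose proof (descent_lemma n h gh L Hg Hl y w) as H2.
  replace (vsub w x) with (vadd (vsub y x) (vscale k D)) in H1 by (unfold w, k; vec_ring).
  replace (vsub w y) with (vscale k D) in H2 by (unfold w, k; vec_ring).
  rewrite dot_addr, dot_scaler in H1. rewrite !dot_scaler, dot_scalel in H2.
  assert (ED : dot D D = dot (gh y) D - dot (gh x) D) by (unfold D at 1; apply dot_subl).
  assert (HkL : k * L = -1) by (unfold k; field; lra).
  apply Rmult_le_reg_r with (2 * L); [lra|].
  replace (dot D D / (2 * L) * (2 * L)) with (dot D D) by (field; lra).
  assert (Hlow : h y - h x - dot (gh x) (vsub y x) >= - k * dot D D - L / 2 * (k * (k * dot D D))).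
  { replace (- k * dot D D) with (-k * dot (gh y) D + k * dot (gh x) D) by (rewrite ED; ring).
    lra. }
  assert (Hval : (- k * dot D D - L / 2 * (k * (k * dot D D))) * (2 * L) = dot D D).
  { replace ((- k * dot D D - L / 2 * (k * (k * dot D D))) * (2 * L))
      with (-2 * (k * L) * dot D D - (k * L) * (k * L) * dot D D) by (field; lra).
    rewrite HkL. ring. }
  rewrite <- Hval at 1. apply Rmult_le_compat_r; lra.
Qed.

Lemma gradient_cocoercive n (h : Vec n -> R) gh L :
  convex h -> is_gradient h gh -> lipschitz L gh ->
  forall x y, dot (vsub (gh y) (gh x)) (vsub (gh y) (gh x))
              <= L * dot (vsub (gh y) (gh x)) (vsub y x).
Proof.
  intros Hc Hg Hl x y. pose proof Hl as [HL0 HL].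
  destruct (Req_dec L 0) as [Z|Z].
  - subst L. specialize (HL y x). pose proof (norm_ge0 n (vsub (gh y) (gh x))).
    rewrite <- norm_pow2. replace (norm (vsub (gh y) (gh x))) with 0 by lra. lra.
  - pose proof (gradient_gap_lower_bound n h gh L Hc Hg Hl ltac:(lra) x y) as H1.
    pose proof (gradient_gap_lower_bound n h gh L Hc Hg Hl ltac:(lra) y x) as H2.
    replace (vsub (gh x) (gh y)) with (vscale (-1) (vsub (gh y) (gh x))) in H2 by vec_ring.
    replace (vsub x y) with (vscale (-1) (vsub y x)) in H2 by vec_ring.
    rewrite dot_scalel, !dot_scaler in H2.
    assert (E3 : dot (vsub (gh y) (gh x)) (vsub y x) = dot (gh y) (vsub y x) - dot (gh x) (vsub y x))
      by apply dot_subl.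
    set (DD := dot (vsub (gh y) (gh x)) (vsub (gh y) (gh x))) in *.
    assert (Hsum : DD / L <= dot (vsub (gh y) (gh x)) (vsub y x)).
    { replace (DD / L) with (DD / (2 * L) + DD / (2 * L)) by (field; lra). lra. }
    apply Rmult_le_compat_l with (r := L) in Hsum; [|lra].
    replace (L * (DD / L)) with DD in Hsum by (field; lra). lra.
Qed.

Lemma gradient_step_nonexpansive n (f : Vec n -> R) gf L t :
  convex f -> is_gradient f gf -> lipschitz L gf -> 0 < L -> 0 < t <= 1 / L ->
  forall x y, norm (vsub (vsub x (vscale t (gf x))) (vsub y (vscale t (gf y)))) <= norm (vsub x y).
Proof.
  intros Hc Hg Hl HL [Ht0 Ht1] x y.
  replace (vsub (vsub x (vscale t (gf x))) (vsub y (vscale t (gf y))))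
    with (vsub (vsub x y) (vscale t (vsub (gf x) (gf y)))) by vec_ring.
  apply norm_le_of_dot; [apply norm_ge0|]. rewrite norm_pow2.
  pose proof (gradient_cocoercive n f gf L Hc Hg Hl y x) as Hco.
  rewrite dot_self_sub, dot_scaler, dot_scalel, dot_scaler,
    (dot_comm n (vsub x y) (vsub (gf x) (gf y))).
  pose proof (dot_self_ge0 n (vsub (gf x) (gf y))).
  assert (tL : t * L <= 1).
  { apply Rmult_le_compat_r with (r := L) in Ht1; [|lra].
    replace (1 / L * L) with 1 in Ht1 by (field; lra). lra. }
  set (a := dot (vsub (gf x) (gf y)) (vsub x y)) in *.
  set (b := dot (vsub (gf x) (gf y)) (vsub (gf x) (gf y))) in *.
  assert (0 <= a) by nra.
  assert (t * t * b <= t * t * (L * a)) by (apply Rmult_le_compat_l; nra).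
  assert (t * (t * L) * a <= t * a) by (apply Rmult_le_compat_r; nra).
  nra.
Qed.

Lemma gradient_step_contraction n (w : Vec n -> R) gw sigma L s :
  0 < sigma -> strongly_convex sigma w -> is_gradient w gw -> lipschitz L gw ->
  0 < s <= 2 / (L + sigma) ->
  exists rho, 0 <= rho < 1 /\ forall x y,
    norm (vsub (vsub x (vscale s (gw x))) (vsub y (vscale s (gw y)))) <= rho * norm (vsub x y).
Proof.
  intros Hs Hsc Hg Hl [Hs0 Hs1]. pose proof Hl as [HL0 _].
  set (q := 1 - sigma * s * (2 - s * L)).
  assert (Hsl : s * L < 2).
  { apply Rmult_le_compat_l with (r := L) in Hs1; [|lra].
    assert (L * (2 / (L + sigma)) < 2).
    { apply Rmult_lt_reg_r with (L + sigma); [lra|]. field_simplify; lra. }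
    lra. }
  assert (Hq : q < 1) by (unfold q; assert (0 < s * (2 - s * L)) by nra; nra).
  exists (sqrt (Rmax q 0)). split.
  { split; [apply sqrt_pos|]. rewrite <- sqrt_1. apply sqrt_lt_1_alt.
    split; [apply Rmax_r|apply Rmax_lub_lt; lra]. }
  intros x y.
  replace (vsub (vsub x (vscale s (gw x))) (vsub y (vscale s (gw y))))
    with (vsub (vsub x y) (vscale s (vsub (gw x) (gw y)))) by vec_ring.
  set (d := vsub x y). set (D := vsub (gw x) (gw y)).
  pose proof (gradient_cocoercive n w gw L (strongly_convex_convex n sigma w ltac:(lra) Hsc) Hg Hl y x)
    as Hco.
  fold d D in Hco.
  pose proof (strongly_convex_gradient n sigma w gw ltac:(lra) Hsc Hg x y) as A1.
  pose proof (strongly_convex_gradient n sigma w gw ltac:(lra) Hsc Hg y x) as A2.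
  replace (vsub y x) with (vscale (-1) d) in A1 by (unfold d; vec_ring).
  fold d in A2. rewrite dot_scalel, !dot_scaler in A1.
  assert (Hmon : sigma * dot d d <= dot D d) by (unfold D; rewrite dot_subl; lra).
  apply norm_le_of_dot; [apply Rmult_le_pos; [apply sqrt_pos|apply norm_ge0]|].
  rewrite Rpow_mult_distr, pow2_sqrt by apply Rmax_r. rewrite norm_pow2.
  rewrite dot_self_sub, dot_scaler, dot_scalel, dot_scaler, (dot_comm n d D).
  pose proof (dot_self_ge0 n d). pose proof (dot_self_ge0 n D).
  assert (q * dot d d <= Rmax q 0 * dot d d) by (apply Rmult_le_compat_r; [lra|apply Rmax_l]).
  assert (s * s * dot D D <= s * s * (L * dot D d)) by (apply Rmult_le_compat_l; nra).
  assert (0 < s * (2 - s * L)) by nra.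
  assert (sigma * dot d d * (s * (2 - s * L)) <= dot D d * (s * (2 - s * L)))
    by (apply Rmult_le_compat_r; lra).
  unfold q in *. nra.
Qed.

(* The variational characterization of [p = prox_{tg}(w)]: [w - p] is a subgradient of [t g] at [p]. *)
Definition prox_vi {n} (t : R) (g : Vec n -> ER) (w p : Vec n) : Prop :=
  exists gp, g p = ERfin gp /\
    forall u r, g u = ERfin r -> t * gp + dot (vsub w p) (vsub u p) <= t * r.

Lemma is_prox_vi n t (g : Vec n -> ER) w p : 0 < t -> proper g -> ext_convex g ->
  is_prox t g w p -> prox_vi t g w p.
Proof.
  intros Ht [x0 [r0 Hx0]] Hc Hp.
  destruct (g p) as [gp|] eqn:Egp.
  2:{ exfalso. specialize (Hp x0). rewrite Egp, Hx0 in Hp. exact Hp. }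
  exists gp. split; auto. intros u r Hu.
  cut (t * gp <= t * r - dot (vsub w p) (vsub u p)); [lra|].
  (* compare p with the point p + l (u - p) of the segment, then let l -> 0 *)
  apply le_of_le_add_small with (c := dot (vsub u p) (vsub u p) / 2).
  { pose proof (dot_self_ge0 n (vsub u p)); lra. }
  intros l Hl.
  specialize (Hc u p l Hl). rewrite Hu, Egp in Hc. simpl in Hc.
  set (ul := vadd (vscale l u) (vscale (1 - l) p)) in *.
  destruct (g ul) as [v|] eqn:Ev; [|contradiction].
  simpl in Hc. specialize (Hp ul). rewrite Egp, Ev, !norm_pow2 in Hp. simpl in Hp.
  replace (vsub ul w) with (vadd (vscale (-1) (vsub w p)) (vscale l (vsub u p))) in Hp
    by (unfold ul; vec_ring).
  replace (vsub p w) with (vscale (-1) (vsub w p)) in Hp by vec_ring.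
  rewrite dot_self_add, !dot_scalel, !dot_scaler in Hp.
  assert (Hk : l * (t * gp) <= l * (t * r - dot (vsub w p) (vsub u p)
                                     + l * (dot (vsub u p) (vsub u p) / 2))).
  { assert (t * v <= t * (l * r + (1 - l) * gp)) by (apply Rmult_le_compat_l; lra). nra. }
  apply Rmult_le_reg_l in Hk; lra.
Qed.

Lemma prox_vi_nonexpansive n t (g : Vec n -> ER) w1 p1 w2 p2 :
  prox_vi t g w1 p1 -> prox_vi t g w2 p2 -> norm (vsub p1 p2) <= norm (vsub w1 w2).
Proof.
  intros [g1 [E1 H1]] [g2 [E2 H2]].
  specialize (H1 p2 g2 E2). specialize (H2 p1 g1 E1).
  set (e := vsub p1 p2). set (o := vsub w1 w2). set (a := vsub w1 p1) in H1.
  replace (vsub p2 p1) with (vscale (-1) e) in H1 by (unfold e; vec_ring).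
  replace (vsub w2 p2) with (vsub a (vsub o e)) in H2 by (unfold a, o, e; vec_ring).
  rewrite dot_scaler in H1. rewrite dot_subl, dot_subl in H2. fold e in H2.
  assert (Hoe : dot e e <= dot o e) by lra.
  pose proof (dot_le_norm n o e). rewrite <- (norm_pow2 n e) in Hoe.
  pose proof (norm_ge0 n e). pose proof (norm_ge0 n o).
  destruct (Req_dec (norm e) 0); [lra|]. nra.
Qed.

Lemma prox_grad_nonexpansive n (f : Vec n -> R) gf L t (g : Vec n -> ER) :
  convex f -> is_gradient f gf -> lipschitz L gf -> 0 < L -> 0 < t <= 1 / L ->
  forall x y p q,
  prox_vi t g (vsub x (vscale t (gf x))) p -> prox_vi t g (vsub y (vscale t (gf y))) q ->
  norm (vsub p q) <= norm (vsub x y).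
Proof.
  intros Hc Hg Hl HL Ht x y p q Hp Hq.
  eapply Rle_trans; [apply (prox_vi_nonexpansive _ _ _ _ _ _ _ Hp Hq)|].
  eapply gradient_step_nonexpansive; eauto.
Qed.

Lemma Xstar_prox_grad_fixed n t f gf L (g : Vec n -> ER) xs : 0 < t -> t <= 1 / L -> 0 < L ->
  is_gradient f gf -> lipschitz L gf -> proper g -> ext_convex g ->
  in_Xstar f g xs -> prox_vi t g (vsub xs (vscale t (gf xs))) xs.
Proof.
  intros Ht HtL HL Hg Hl [x0 [r0 Hx0]] Hc Hx.
  destruct (g xs) as [gx|] eqn:Egx.
  2:{ exfalso. specialize (Hx x0). unfold phi in Hx. rewrite Egx, Hx0 in Hx. exact Hx. }
  exists gx. split; auto. intros u r Hu.
  replace (vsub (vsub xs (vscale t (gf xs))) xs) with (vscale (-t) (gf xs)) by vec_ring.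
  rewrite dot_scalel.
  cut (gx <= r + dot (gf xs) (vsub u xs)); [intros; nra|].
  apply le_of_le_add_small with (c := L / 2 * dot (vsub u xs) (vsub u xs)).
  { pose proof (dot_self_ge0 n (vsub u xs)); nra. }
  intros l Hl0.
  specialize (Hc u xs l Hl0). rewrite Hu, Egx in Hc. simpl in Hc.
  set (ul := vadd (vscale l u) (vscale (1 - l) xs)) in *.
  destruct (g ul) as [v|] eqn:Ev; [|contradiction].
  simpl in Hc. specialize (Hx ul). unfold phi in Hx. rewrite Egx, Ev in Hx. simpl in Hx.
  pose proof (descent_lemma n f gf L Hg Hl xs ul) as Hd.
  replace (vsub ul xs) with (vscale l (vsub u xs)) in Hd by (unfold ul; vec_ring).
  rewrite dot_scaler, dot_scalel, dot_scaler in Hd.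
  assert (Hk : l * gx <= l * (r + dot (gf xs) (vsub u xs)
                              + l * (L / 2 * dot (vsub u xs) (vsub u xs)))) by nra.
  apply Rmult_le_reg_l in Hk; lra.
Qed.

Definition convex_set {n} (C : Vec n -> Prop) : Prop :=
  forall u v l, 0 < l < 1 -> C u -> C v -> C (vadd (vscale l u) (vscale (1 - l) v)).

Lemma Xstar_convex n (f : Vec n -> R) (g : Vec n -> ER) :
  convex f -> ext_convex g -> convex_set (in_Xstar f g).
Proof.
  intros Hf Hg u v l Hl Hu Hv y. specialize (Hu y). specialize (Hv y).
  pose proof (Hf u v l ltac:(lra)) as Hfc. pose proof (Hg u v l Hl) as Hgc.
  unfold phi in *.
  destruct (g y) as [gy|]; [|destruct (g (vadd (vscale l u) (vscale (1 - l) v))); exact I].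
  destruct (g u) as [gu|]; [|contradiction].
  destruct (g v) as [gv|]; [|contradiction].
  destruct (g (vadd (vscale l u) (vscale (1 - l) v))) as [gl|]; [|contradiction].
  simpl in *.
  assert (l * (gu + f u) + (1 - l) * (gv + f v) <= l * (gy + f y) + (1 - l) * (gy + f y))
    by (apply Rplus_le_compat; apply Rmult_le_compat_l; lra).
  lra.
Qed.

Definition limsup_nonpos (u : nat -> R) : Prop :=
  forall eps, 0 < eps -> exists N, forall k, (N <= k)%nat -> u k <= eps.

Lemma contraction_eventually_lt (b gam : nat -> R) N e :
  0 < e -> (forall k, (N <= k)%nat -> 0 < gam k <= 1) ->
  cv_infty (fun m => sum_f_R0 gam m) ->
  (forall k, (N <= k)%nat -> b (S k) <= (1 - gam k) * b k) ->
  exists K, forall k, (K <= k)%nat -> b k < e.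
Proof.
  intros He Hg Hs Hr.
  assert (Hex : exists k, (N <= k)%nat /\ b k < e).
  { apply NNPP; intro Hn.
    assert (Hall : forall k, (N <= k)%nat -> e <= b k).
    { intros k Hk. apply Rnot_lt_le. intro. apply Hn. exists k; auto. }
    (* while b >= e, each step lowers b by at least e * gam k, and sum gam diverges *)
    assert (Htel : forall j, b (S (N + j)) + e * (sum_f_R0 gam (N + j) - sum_f_R0 gam N) <= b (S N)).
    { induction j as [|j IH]; [rewrite Nat.add_0_r; lra|].
      replace (N + S j)%nat with (S (N + j)) by lia.
      change (sum_f_R0 gam (S (N + j))) with (sum_f_R0 gam (N + j) + gam (S (N + j))).
      specialize (Hr (S (N + j)) ltac:(lia)). specialize (Hall (S (N + j)) ltac:(lia)).
      specialize (Hg (S (N + j)) ltac:(lia)). nra. }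
    destruct (Hs ((b (S N) - e) / e + sum_f_R0 gam N)) as [M HM].
    specialize (HM (N + M)%nat ltac:(lia)). specialize (Htel M).
    specialize (Hall (S (N + M)) ltac:(lia)).
    assert (b (S N) - e < e * (sum_f_R0 gam (N + M) - sum_f_R0 gam N)).
    { replace (b (S N) - e) with (e * ((b (S N) - e) / e)) by (field; lra).
      apply Rmult_lt_compat_l; lra. }
    lra. }
  destruct Hex as [k0 [Hk0 Hb]].
  exists k0. intros k Hk. induction Hk as [|m Hm IH]; auto.
  specialize (Hr m ltac:(lia)). specialize (Hg m ltac:(lia)).
  destruct (Rle_dec 0 (b m)); nra.
Qed.

Lemma xu_lemma (a gam del : nat -> R) K :
  (forall k, (K <= k)%nat -> 0 < gam k <= 1) -> cv_infty (fun m => sum_f_R0 gam m) ->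
  (forall k, (K <= k)%nat -> a (S k) <= (1 - gam k) * a k + gam k * del k) ->
  limsup_nonpos del -> limsup_nonpos a.
Proof.
  intros Hg Hs Hr Hd eps Heps.
  destruct (Hd (eps / 2)) as [N HN]; [lra|].
  destruct (contraction_eventually_lt (fun k => a k - eps / 2) gam (K + N) (eps / 2))
    as [M HM]; [lra| |auto| |].
  - intros k Hk; apply Hg; lia.
  - intros k Hk. specialize (Hr k ltac:(lia)). specialize (HN k ltac:(lia)).
    specialize (Hg k ltac:(lia)). nra.
  - exists M. intros k Hk. specialize (HM k Hk). lra.
Qed.

Lemma subsequence_choice (Q : nat -> nat -> Prop) :
  (forall j N, exists k, (N <= k)%nat /\ Q j k) ->
  exists phi : nat -> nat, (forall j, (phi j < phi (S j))%nat) /\ (forall j, Q j (phi j)).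
Proof.
  intros H.
  destruct (choice (fun (jN : nat * nat) k => (snd jN <= k)%nat /\ Q (fst jN) k)) as [c Hc].
  { intros [j N]. apply H. }
  exists (fix phi j := match j with O => c (O, O) | S j' => c (S j', S (phi j')) end).
  split.
  - intros j. simpl.
    match goal with |- (?a < c (S j, S ?b))%nat => destruct (Hc (S j, S b)) as [A _] end.
    exact A.
  - intros [|j]; simpl; apply (Hc (_, _)).
Qed.

Lemma strict_incr_ge (phi : nat -> nat) :
  (forall j, (phi j < phi (S j))%nat) -> forall j, (j <= phi j)%nat.
Proof. intros H j; induction j; [lia|]. specialize (H j); lia. Qed.

Lemma strict_incr_mono (phi : nat -> nat) : (forall j, (phi j < phi (S j))%nat) ->
  forall i j, (i <= j)%nat -> (phi i <= phi j)%nat.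
Proof. intros H i j Hij; induction Hij; [lia|]. specialize (H m); lia. Qed.

Lemma inv_succ_small eps : 0 < eps -> exists N, forall j, (N <= j)%nat -> / (INR j + 1) < eps.
Proof.
  intros He. destruct (INR_unbounded (/ eps)) as [N HN]. exists N. intros j Hj.
  apply le_INR in Hj. pose proof (pos_INR N).
  rewrite <- (Rinv_inv eps). apply Rinv_lt_contravar; [|lra].
  apply Rmult_lt_0_compat; [apply Rinv_0_lt_compat; auto|lra].
Qed.

Lemma bolzano_weierstrass_R (r : nat -> R) B (P : nat -> Prop) :
  (forall k, Rabs (r k) <= B) -> (forall N, exists k, (N <= k)%nat /\ P k) ->
  exists (phi : nat -> nat) l, (forall j, (phi j < phi (S j))%nat) /\ (forall j, P (phi j)) /\
    Un_cv (fun j => r (phi j)) l.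
Proof.
  intros Hb HP.
  destruct (subsequence_choice (fun _ k => P k) (fun _ N => HP N)) as [psi [Hpsi1 Hpsi2]].
  destruct (Bolzano_Weierstrass (fun j => r (psi j)) (fun c => -B <= c <= B) (compact_P3 _ _))
    as [l Hl].
  { intros j. specialize (Hb (psi j)).
    pose proof (Rle_abs (r (psi j))); pose proof (Rle_abs (- r (psi j))).
    rewrite Rabs_Ropp in *; lra. }
  destruct (subsequence_choice (fun j k => Rabs (r (psi k) - l) < / (INR j + 1)))
    as [phi2 [Hp1 Hp2]].
  { intros j N.
    assert (Hpos : 0 < / (INR j + 1)) by (apply Rinv_0_lt_compat; pose proof (pos_INR j); lra).
    destruct (Hl (disc l (mkposreal _ Hpos)) N) as [p [Hp Hv]].
    { exists (mkposreal _ Hpos). intros y Hy; auto. }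
    exists p; split; auto. }
  exists (fun j => psi (phi2 j)), l. split; [|split].
  - intros j. specialize (Hp1 j). apply strict_incr_mono with (phi := psi) in Hp1; auto.
    specialize (Hpsi1 (phi2 j)). lia.
  - intros j; apply Hpsi2.
  - intros eps He. destruct (inv_succ_small eps He) as [N HN]. exists N. intros j Hj.
    unfold Rdist. specialize (Hp2 j). specialize (HN j Hj). lra.
Qed.

Definition vtail {m} (v : Vec (S m)) : Vec m := fun i => v (Fin.FS i).

Lemma norm_vtail m (u : Vec (S m)) : norm (vtail u) <= norm u.
Proof.
  unfold norm. apply sqrt_le_1_alt. change (dot u u) with (u Fin.F1 * u Fin.F1 + dot (vtail u) (vtail u)).
  pose proof (Rle_0_sqr (u Fin.F1)). unfold Rsqr in *. lra.
Qed.

Lemma Rabs_vhead m (u : Vec (S m)) : Rabs (u Fin.F1) <= norm u.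
Proof.
  apply Rabs_le_of_pow2; [apply norm_ge0|]. rewrite norm_pow2.
  change (dot u u) with (u Fin.F1 * u Fin.F1 + dot (vtail u) (vtail u)).
  pose proof (dot_self_ge0 m (vtail u)). simpl. lra.
Qed.

Lemma bolzano_weierstrass_vec n : forall (u : nat -> Vec n) B (P : nat -> Prop),
  (forall k, norm (u k) <= B) -> (forall N, exists k, (N <= k)%nat /\ P k) ->
  exists (phi : nat -> nat) l, (forall j, (phi j < phi (S j))%nat) /\ (forall j, P (phi j)) /\
    vconverges (fun j => u (phi j)) l.
Proof.
  induction n as [|m IH]; intros u B P Hb HP.
  - destruct (subsequence_choice (fun _ k => P k) (fun _ N => HP N)) as [psi [H1 H2]].
    exists psi, (fun _ => 0). split; [auto|split; [auto|]].
    intros eps He. exists O. intros k _. unfold norm. simpl. rewrite sqrt_0. auto.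
  - (* extract a subsequence converging in the last m coordinates, then in the first one *)
    destruct (IH (fun k => vtail (u k)) B P) as [phi1 [l1 [Hi1 [HP1 Hc1]]]]; auto.
    { intros k. eapply Rle_trans; [apply norm_vtail|apply Hb]. }
    destruct (bolzano_weierstrass_R (fun j => u (phi1 j) Fin.F1) B (fun _ => True))
      as [phi2 [a [Hi2 [_ Hc2]]]].
    { intros k. eapply Rle_trans; [apply Rabs_vhead|apply Hb]. }
    { intros N; exists N; split; auto. }
    exists (fun j => phi1 (phi2 j)), (fun i => Fin.caseS' i (fun _ => R) a l1).
    split; [|split].
    + intros j. specialize (Hi2 j). apply strict_incr_mono with (phi := phi1) in Hi2; auto.
      specialize (Hi1 (phi2 j)). lia.
    + intros j; apply HP1.
    + intros eps He.
      destruct (Hc1 (eps / 2)) as [N1 HN1]; [lra|]. destruct (Hc2 (eps / 2)) as [N2 HN2]; [lra|].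
      exists (N1 + N2)%nat. intros k Hk.
      specialize (HN1 (phi2 k) ltac:(pose proof (strict_incr_ge _ Hi2 k); lia)).
      specialize (HN2 k ltac:(lia)). unfold Rdist in HN2. simpl in HN2.
      apply norm_lt_of_dot; [lra|].
      set (v := vsub (u (phi1 (phi2 k))) (fun i => Fin.caseS' i (fun _ => R) a l1)).
      change (dot v v) with (v Fin.F1 * v Fin.F1 + dot (vtail v) (vtail v)).
      change (vtail v) with (vsub (vtail (u (phi1 (phi2 k)))) l1).
      rewrite <- norm_pow2.
      pose proof (norm_ge0 m (vsub (vtail (u (phi1 (phi2 k)))) l1)).
      unfold v, vsub at 1 2. simpl.
      set (h := u (phi1 (phi2 k)) Fin.F1 - a) in *.
      pose proof (Rle_abs h). pose proof (Rle_abs (- h)). rewrite Rabs_Ropp in *.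
      nra.
Qed.

Lemma vconverges_sub n (a b : nat -> Vec n) la lb : vconverges a la -> vconverges b lb ->
  vconverges (fun j => vsub (a j) (b j)) (vsub la lb).
Proof.
  intros Ha Hb eps He.
  destruct (Ha (eps / 2)) as [N1 H1]; [lra|]. destruct (Hb (eps / 2)) as [N2 H2]; [lra|].
  exists (N1 + N2)%nat. intros k Hk. specialize (H1 k ltac:(lia)). specialize (H2 k ltac:(lia)).
  replace (vsub (vsub (a k) (b k)) (vsub la lb))
    with (vadd (vsub (a k) la) (vscale (-1) (vsub (b k) lb))) by vec_ring.
  eapply Rle_lt_trans; [apply norm_triangle|]. rewrite normZ.
  replace (Rabs (-1)) with 1 by (unfold Rabs; destruct Rcase_abs; lra). lra.
Qed.

Lemma vconverges_const n (c : Vec n) : vconverges (fun _ => c) c.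
Proof. intros eps He. exists O. intros. rewrite dist_self. auto. Qed.

Lemma vconverges_lipschitz n (F : Vec n -> Vec n) L (a : nat -> Vec n) la :
  lipschitz L F -> vconverges a la -> vconverges (fun j => F (a j)) (F la).
Proof.
  intros [HL Hl] Ha eps He. destruct (Ha (eps / (L + 1))) as [N H1].
  { apply Rdiv_lt_0_compat; lra. }
  exists N. intros k Hk. specialize (H1 k Hk). specialize (Hl (a k) la).
  pose proof (norm_ge0 n (vsub (a k) la)).
  assert (L * norm (vsub (a k) la) <= L * (eps / (L + 1))) by (apply Rmult_le_compat_l; lra).
  assert (L * (eps / (L + 1)) < eps).
  { apply Rmult_lt_reg_r with (L + 1); [lra|]. field_simplify; lra. }
  lra.
Qed.

Lemma vconverges_scale n (a : nat -> Vec n) la c : vconverges a la ->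
  vconverges (fun j => vscale c (a j)) (vscale c la).
Proof.
  apply (vconverges_lipschitz n (vscale c) (Rabs c)).
  split; [apply Rabs_pos|]. intros u v.
  replace (vsub (vscale c u) (vscale c v)) with (vscale c (vsub u v)) by vec_ring.
  rewrite normZ. lra.
Qed.

Lemma vconverges_close n (a b : nat -> Vec n) l : vconverges a l ->
  limsup_nonpos (fun k => norm (vsub (a k) (b k))) -> vconverges b l.
Proof.
  intros Ha Hd eps He.
  destruct (Ha (eps / 2)) as [N1 H1]; [lra|]. destruct (Hd (eps / 4)) as [N2 H2]; [lra|].
  exists (N1 + N2)%nat. intros k Hk. specialize (H1 k ltac:(lia)). specialize (H2 k ltac:(lia)).
  pose proof (dist_triangle n (b k) (a k) l). rewrite (dist_comm n (b k) (a k)) in H. lra.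
Qed.

Lemma dot_converges n (a b : nat -> Vec n) la lb : vconverges a la -> vconverges b lb ->
  Un_cv (fun j => dot (a j) (b j)) (dot la lb).
Proof.
  intros Ha Hb eps He.
  set (A := norm la + 1). set (Bb := norm lb + 1).
  pose proof (norm_ge0 n la). pose proof (norm_ge0 n lb).
  destruct (Ha (eps / (2 * Bb))) as [N1 H1]; [unfold Bb; apply Rdiv_lt_0_compat; lra|].
  destruct (Hb (Rmin 1 (eps / (2 * A)))) as [N2 H2].
  { apply Rmin_pos; [lra|unfold A; apply Rdiv_lt_0_compat; lra]. }
  exists (N1 + N2)%nat. intros k Hk. specialize (H1 k ltac:(lia)). specialize (H2 k ltac:(lia)).
  unfold Rdist.
  replace (dot (a k) (b k) - dot la lb) with (dot (vsub (a k) la) (b k) + dot la (vsub (b k) lb))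
    by (rewrite dot_subl, dot_subr; ring).
  pose proof (Rmin_l 1 (eps / (2 * A))). pose proof (Rmin_r 1 (eps / (2 * A))).
  assert (Hbk : norm (b k) <= Bb).
  { replace (b k) with (vadd (vsub (b k) lb) lb) by vec_ring.
    pose proof (norm_triangle n (vsub (b k) lb) lb). unfold Bb; lra. }
  eapply Rle_lt_trans; [apply Rabs_triang|].
  pose proof (cauchy_schwarz n (vsub (a k) la) (b k)) as C1.
  pose proof (cauchy_schwarz n la (vsub (b k) lb)) as C2.
  pose proof (norm_ge0 n (vsub (a k) la)) as P1. pose proof (norm_ge0 n (vsub (b k) lb)) as P2.
  pose proof (norm_ge0 n (b k)) as P3.
  assert (Q1 : norm (vsub (a k) la) * norm (b k) <= norm (vsub (a k) la) * Bb)
    by (apply Rmult_le_compat_l; lra).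
  assert (Q2 : norm (vsub (a k) la) * Bb < eps / (2 * Bb) * Bb)
    by (apply Rmult_lt_compat_r; unfold Bb in *; lra).
  assert (Q3 : norm la * norm (vsub (b k) lb) <= A * (eps / (2 * A)))
    by (apply Rmult_le_compat; unfold A in *; lra).
  replace (eps / (2 * Bb) * Bb) with (eps / 2) in Q2 by (field; unfold Bb; lra).
  replace (A * (eps / (2 * A))) with (eps / 2) in Q3 by (field; unfold A; lra).
  lra.
Qed.

Definition seq_closed {n} (C : Vec n -> Prop) : Prop :=
  forall (u : nat -> Vec n) l, (forall j, C (u j)) -> vconverges u l -> C l.

Lemma minimizing_sequence {A : Type} (P : A -> Prop) (w : A -> R) B a0 :
  P a0 -> (forall u, P u -> B <= w u) ->
  exists m (us : nat -> A), (forall u, P u -> m <= w u) /\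
    forall j, P (us j) /\ w (us j) < m + / (INR j + 1).
Proof.
  intros Ha0 HB.
  set (E := fun r => exists u, P u /\ r = - w u).
  destruct (completeness E) as [M [HM1 HM2]].
  { exists (- B). intros r [u [Hu ->]]. specialize (HB u Hu). lra. }
  { exists (- w a0), a0. auto. }
  assert (Hj : forall j : nat, exists u, P u /\ w u < - M + / (INR j + 1)).
  { intros j. apply NNPP. intros Hn.
    assert (0 < / (INR j + 1)) by (apply Rinv_0_lt_compat; pose proof (pos_INR j); lra).
    assert (Hub : is_upper_bound E (M - / (INR j + 1))).
    { intros r [u [Hu ->]]. apply Rnot_lt_le. intro. apply Hn. exists u. split; auto. lra. }
    specialize (HM2 _ Hub). lra. }
  destruct (choice _ Hj) as [us Hus].
  exists (- M), us. split; auto.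
  intros u Hu. assert (E (- w u)) by (exists u; auto). specialize (HM1 _ H). lra.
Qed.

Lemma strongly_convex_quadratic_growth n sigma (w : Vec n -> R) gw xh u :
  0 <= sigma -> strongly_convex sigma w -> is_gradient w gw ->
  w xh - norm (gw xh) * norm (vsub u xh) + sigma / 2 * norm (vsub u xh) ^ 2 <= w u.
Proof.
  intros Hs Hsc Hg. pose proof (strongly_convex_gradient n sigma w gw Hs Hsc Hg xh u).
  pose proof (dot_ge_norm n (gw xh) (vsub u xh)). rewrite norm_pow2. lra.
Qed.

Lemma strongly_convex_bounded_below n sigma (w : Vec n -> R) gw :
  0 < sigma -> strongly_convex sigma w -> is_gradient w gw -> exists B, forall u, B <= w u.
Proof.
  intros Hs Hsc Hg. set (xh := fun _ : Fin.t n => 0). set (G := norm (gw xh)).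
  exists (w xh - G * G / (2 * sigma)). intros u.
  pose proof (strongly_convex_quadratic_growth n sigma w gw xh u ltac:(lra) Hsc Hg). fold G in H.
  set (d := norm (vsub u xh)) in *.
  (* completing the square in d *)
  assert (G * G / (2 * sigma) + (sigma / 2 * d ^ 2 - G * d) = (sigma * d - G) ^ 2 / (2 * sigma))
    by (field; lra).
  assert (0 <= (sigma * d - G) ^ 2 / (2 * sigma))
    by (apply Rmult_le_pos; [apply pow2_ge_0|left; apply Rinv_0_lt_compat; lra]).
  lra.
Qed.

Lemma strongly_convex_sublevel_bounded n sigma (w : Vec n -> R) gw xh c :
  0 < sigma -> strongly_convex sigma w -> is_gradient w gw ->
  exists D, forall u, w u <= c -> norm (vsub u xh) <= D.
Proof.
  intros Hs Hsc Hg. set (G := norm (gw xh)). set (K := Rmax 1 (c - w xh)).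
  exists (Rmax 1 (2 * (K + G) / sigma)). intros u Hu.
  pose proof (strongly_convex_quadratic_growth n sigma w gw xh u ltac:(lra) Hsc Hg). fold G in H.
  set (d := norm (vsub u xh)) in *.
  pose proof (Rmax_l 1 (c - w xh)). pose proof (Rmax_r 1 (c - w xh)). fold K in H0, H1.
  pose proof (norm_ge0 n (gw xh)). fold G in H2.
  destruct (Rle_dec d 1) as [Hd|Hd]; [pose proof (Rmax_l 1 (2 * (K + G) / sigma)); lra|].
  (* for d > 1: d (sigma d / 2 - G) <= K <= K d *)
  assert (sigma / 2 * d <= K + G) by nra.
  assert (d <= 2 * (K + G) / sigma).
  { apply Rmult_le_reg_r with sigma; auto. field_simplify; lra. }
  pose proof (Rmax_r 1 (2 * (K + G) / sigma)); lra.
Qed.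

Lemma convex_gradient_lower_limit n (w : Vec n -> R) gw (u : nat -> Vec n) l c :
  convex w -> is_gradient w gw -> vconverges u l ->
  limsup_nonpos (fun j => w (u j) - c) -> w l <= c.
Proof.
  intros Hc Hg Hu Hlim. apply le_of_le_add_eps with 1; [lra|]. intros eps He.
  pose proof (dot_converges n (fun _ => gw l) (fun j => vsub (u j) l) (gw l) (vsub l l)
    (vconverges_const n _) (vconverges_sub n _ _ _ _ Hu (vconverges_const n _))) as Hd.
  rewrite dot_subr, Rminus_diag in Hd.
  destruct (Hd (eps / 2)) as [N1 HN1]; [lra|]. destruct (Hlim (eps / 2)) as [N2 HN2]; [lra|].
  specialize (HN1 (N1 + N2)%nat ltac:(lia)). specialize (HN2 (N1 + N2)%nat ltac:(lia)).
  unfold Rdist in HN1. rewrite Rminus_0_r in HN1.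
  pose proof (convex_gradient n w gw Hc Hg l (u (N1 + N2)%nat)).
  pose proof (Rle_abs (- dot (gw l) (vsub (u (N1 + N2)%nat) l))). rewrite Rabs_Ropp in *.
  lra.
Qed.

Lemma strongly_convex_min_exists n (C : Vec n -> Prop) sigma (w : Vec n -> R) gw :
  seq_closed C -> (exists x, C x) -> 0 < sigma -> strongly_convex sigma w -> is_gradient w gw ->
  exists xs, C xs /\ forall u, C u -> w xs <= w u.
Proof.
  intros Hcl [xh Hxh] Hs Hsc Hg.
  destruct (strongly_convex_bounded_below n sigma w gw Hs Hsc Hg) as [B HB].
  destruct (minimizing_sequence C w B xh Hxh (fun u _ => HB u)) as [m [us [Hm Hus]]].
  destruct (strongly_convex_sublevel_bounded n sigma w gw xh (w xh + 1) Hs Hsc Hg) as [D HD].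
  assert (Hbd : forall j, norm (us j) <= norm xh + D).
  { intros j. destruct (Hus j) as [Hu1 Hu2]. specialize (Hm xh Hxh).
    assert (Hinv : / (INR j + 1) <= 1).
    { rewrite <- Rinv_1. apply Rinv_le_contravar; [lra|]. pose proof (pos_INR j); lra. }
    specialize (HD (us j) ltac:(lra)).
    replace (us j) with (vadd (vsub (us j) xh) xh) by vec_ring.
    pose proof (norm_triangle n (vsub (us j) xh) xh). lra. }
  destruct (bolzano_weierstrass_vec n us _ (fun _ => True) Hbd) as [phi [ub [Hi [_ Hc]]]].
  { intros N; exists N; split; auto. }
  exists ub. split; [exact (Hcl _ _ (fun j => proj1 (Hus (phi j))) Hc)|].
  intros u Hu. apply Rle_trans with m; auto.
  apply (convex_gradient_lower_limit n w gw (fun j => us (phi j)) ub m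
           (strongly_convex_convex n sigma w ltac:(lra) Hsc) Hg Hc).
  intros eps He. destruct (inv_succ_small eps He) as [N HN]. exists N. intros j Hj.
  destruct (Hus (phi j)) as [_ Hw]. specialize (HN (phi j) ltac:(pose proof (strict_incr_ge _ Hi j); lia)).
  lra.
Qed.

Lemma min_convex_set_vi n (C : Vec n -> Prop) (w : Vec n -> R) gw L xs :
  convex_set C -> is_gradient w gw -> lipschitz L gw ->
  C xs -> (forall u, C u -> w xs <= w u) ->
  forall u, C u -> dot (gw xs) (vsub u xs) >= 0.
Proof.
  intros Hconv Hg Hl Hxs Hmin u Hu. apply Rle_ge, Ropp_le_cancel. rewrite Ropp_0.
  apply le_of_le_add_small with (c := L / 2 * dot (vsub u xs) (vsub u xs)).
  { pose proof (dot_self_ge0 n (vsub u xs)). destruct Hl. nra. }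
  intros l Hl0.
  set (ul := vadd (vscale l u) (vscale (1 - l) xs)).
  pose proof (Hmin ul (Hconv u xs l Hl0 Hu Hxs)) as Hw.
  pose proof (descent_lemma n w gw L Hg Hl xs ul) as Hd.
  replace (vsub ul xs) with (vscale l (vsub u xs)) in Hd by (unfold ul; vec_ring).
  rewrite dot_scaler, dot_scalel, dot_scaler in Hd.
  assert (Hk : l * (- dot (gw xs) (vsub u xs))
               <= l * (0 + l * (L / 2 * dot (vsub u xs) (vsub u xs)))) by nra.
  apply Rmult_le_reg_l in Hk; lra.
Qed.

Lemma vi_point_unique_min n (C : Vec n -> Prop) sigma (w : Vec n -> R) gw xs v :
  0 < sigma -> strongly_convex sigma w -> is_gradient w gw ->
  C xs -> (forall u, C u -> dot (gw xs) (vsub u xs) >= 0) ->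
  C v -> (forall u, C u -> w v <= w u) -> v = xs.
Proof.
  intros Hs Hsc Hg Hxs Hvi Hv Hmin. specialize (Hmin xs Hxs). specialize (Hvi v Hv).
  pose proof (strongly_convex_gradient n sigma w gw ltac:(lra) Hsc Hg xs v).
  pose proof (dot_self_ge0 n (vsub v xs)).
  assert (Hd : dot (vsub v xs) (vsub v xs) = 0) by nra.
  apply vec_ext. intros i. pose proof (dot_self_eq0 n _ Hd i) as Hi. unfold vsub in Hi. lra.
Qed.

Lemma prox_grad_demiclosed n (f : Vec n -> R) gf L (g : Vec n -> ER) t (a p : nat -> Vec n) xb :
  0 < t -> convex f -> is_gradient f gf -> lipschitz L gf -> lsc g ->
  vconverges a xb -> vconverges p xb ->
  (forall j, prox_vi t g (vsub (a j) (vscale t (gf (a j)))) (p j)) -> in_Xstar f g xb.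
Proof.
  intros Ht Hc Hg Hl Hlsc Ha Hp Hvi u. unfold phi.
  destruct (g u) as [r|] eqn:Eu; [|destruct (g xb); exact I].
  set (c := r + dot (gf xb) (vsub u xb)).
  set (D := fun j => dot (vsub (vsub (a j) (vscale t (gf (a j)))) (p j)) (vsub u (p j))).
  assert (HD : Un_cv D (dot (vsub (vsub xb (vscale t (gf xb))) xb) (vsub u xb))).
  { apply dot_converges; apply vconverges_sub; auto; [|apply vconverges_const].
    apply vconverges_sub; auto. apply vconverges_scale. eapply vconverges_lipschitz; eauto. }
  replace (dot (vsub (vsub xb (vscale t (gf xb))) xb) (vsub u xb))
    with (- t * dot (gf xb) (vsub u xb)) in HD
    by (rewrite <- dot_scalel; f_equal; vec_ring).
  assert (Hj : forall j, exists gp, g (p j) = ERfin gp /\ gp <= r - D j / t).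
  { intros j. destruct (Hvi j) as [gp [E1 H1]]. exists gp. split; auto.
    specialize (H1 u r Eu). fold (D j) in H1.
    apply Rmult_le_reg_l with t; auto. field_simplify; lra. }
  (* by lower semicontinuity, g xb cannot exceed any level above c = lim (r - D j / t) *)
  assert (Hno : forall m, c < m -> ER_lt (ERfin m) (g xb) -> False).
  { intros m Hm Hlt. destruct (Hlsc xb m Hlt) as [delta [Hdel Hy]].
    destruct (Hp delta Hdel) as [N1 HN1].
    destruct (HD ((m - c) * t)) as [N2 HN2]; [apply Rmult_lt_0_compat; lra|].
    specialize (HN1 (N1 + N2)%nat ltac:(lia)). specialize (HN2 (N1 + N2)%nat ltac:(lia)).
    specialize (Hy _ HN1). destruct (Hj (N1 + N2)%nat) as [gp [E1 H1]].
    rewrite E1 in Hy. simpl in Hy. unfold Rdist in HN2.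
    pose proof (Rle_abs (- (D (N1 + N2)%nat - - t * dot (gf xb) (vsub u xb)))) as Habs.
    rewrite Rabs_Ropp in Habs.
    assert (D (N1 + N2)%nat / t > - dot (gf xb) (vsub u xb) - (m - c)).
    { apply Rmult_lt_reg_r with t; auto. field_simplify; lra. }
    unfold c in *. lra. }
  pose proof (convex_gradient n f gf Hc Hg xb u).
  destruct (g xb) as [v|] eqn:Ev.
  - simpl. destruct (Rle_dec v c) as [Hv|Hv]; [unfold c in Hv; lra|].
    exfalso. apply (Hno ((v + c) / 2)); simpl; lra.
  - exfalso. apply (Hno (c + 1)); simpl; auto. lra.
Qed.

Lemma limsup_nonpos_shift u : limsup_nonpos u -> limsup_nonpos (fun k => u (S k)).
Proof. intros H eps He. destruct (H eps He) as [N HN]. exists N. intros k Hk. apply HN. lia. Qed.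

Lemma limsup_nonpos_scale c u : 0 <= c -> limsup_nonpos u -> limsup_nonpos (fun k => c * u k).
Proof.
  intros Hc H eps He. destruct (H (eps / (c + 1))) as [N HN]; [apply Rdiv_lt_0_compat; lra|].
  exists N. intros k Hk. specialize (HN k Hk).
  assert (c * u k <= c * (eps / (c + 1))) by (apply Rmult_le_compat_l; lra).
  assert (c * (eps / (c + 1)) <= eps).
  { apply Rmult_le_reg_r with (c + 1); [lra|]. field_simplify; lra. }
  lra.
Qed.

Lemma cv_infty_sum_scal c u : 0 < c ->
  cv_infty (fun m => sum_f_R0 u m) -> cv_infty (fun m => sum_f_R0 (fun k => c * u k) m).
Proof.
  intros Hc H M. destruct (H (M / c)) as [N HN]. exists N. intros m Hm.
  specialize (HN m Hm). rewrite (sum_eq _ (fun k => u k * c)) by (intros; ring).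
  rewrite <- scal_sum.
  apply Rmult_lt_compat_l with (r := c) in HN; [|lra].
  replace (c * (M / c)) with M in HN by (field; lra). lra.
Qed.

Lemma ratio_to_one_relative_increment (u : nat -> R) :
  (forall k, 0 < u (S k)) -> Un_cv (fun k => u (S k) / u k) 1 ->
  limsup_nonpos (fun k => Rabs (u (S k) - u k) / u (S k)).
Proof.
  intros Hpos Hr eps He.
  set (eta := Rmin (1 / 2) (eps / 2)).
  assert (Heta : 0 < eta) by (apply Rmin_pos; lra).
  pose proof (Rmin_l (1 / 2) (eps / 2)). pose proof (Rmin_r (1 / 2) (eps / 2)). fold eta in H, H0.
  destruct (Hr eta Heta) as [N HN]. exists (S N). intros k Hk. destruct k as [|k]; [lia|].
  specialize (HN (S k) ltac:(lia)). unfold Rdist in HN.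
  set (A := u (S k)) in *. set (A' := u (S (S k))) in *.
  pose proof (Hpos k) as HA. pose proof (Hpos (S k)) as HA'. fold A in HA. fold A' in HA'.
  assert (HA1 : Rabs (A' - A) <= eta * A).
  { replace (A' - A) with ((A' / A - 1) * A) by (field; lra).
    rewrite Rabs_mult, (Rabs_pos_eq A) by lra. apply Rmult_le_compat_r; lra. }
  assert (HA2 : A < 2 * A').
  { pose proof (Rle_abs (- (A' / A - 1))) as Ha. rewrite Rabs_Ropp in Ha.
    assert (Hq : 1 / 2 * A < A' / A * A) by (apply Rmult_lt_compat_r; lra).
    replace (A' / A * A) with A' in Hq by (field; lra). lra. }
  apply Rmult_le_reg_r with A'; [lra|].
  replace (Rabs (A' - A) / A' * A') with (Rabs (A' - A)) by (field; lra).
  nra.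
Qed.

Lemma dot_self_add_le n (u v : Vec n) :
  dot (vadd u v) (vadd u v) <= dot u u + 2 * dot v (vadd u v).
Proof. rewrite dot_self_add, dot_addr, (dot_comm n v u). pose proof (dot_self_ge0 n v). lra. Qed.

Section BigSam.

Variables (n : nat) (C : Vec n -> Prop) (T : Vec n -> Vec n -> Prop).
Hypothesis T_nonexpansive :
  forall a b p q, T a p -> T b q -> norm (vsub p q) <= norm (vsub a b).
Hypothesis T_fixed : forall u, C u -> T u u.
Hypothesis T_demiclosed : forall (a p : nat -> Vec n) l,
  vconverges a l -> vconverges p l -> (forall j, T (a j) (p j)) -> C l.

Variables (gradw : Vec n -> Vec n) (s rho : R).
Hypothesis s_pos : 0 < s.
Hypothesis rho_range : 0 <= rho < 1.
Hypothesis S_contraction : forall a b,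
  norm (vsub (vsub a (vscale s (gradw a))) (vsub b (vscale s (gradw b)))) <= rho * norm (vsub a b).

Variable alpha : nat -> R.
Hypothesis alpha_range : forall k, 0 < alpha (S k) <= 1.
Hypothesis alpha_lim : Un_cv alpha 0.
Hypothesis alpha_sum : cv_infty (fun m => sum_f_R0 (fun k => alpha (S k)) m).
Hypothesis alpha_ratio : Un_cv (fun k => alpha (S k) / alpha k) 1.

Variables x y z : nat -> Vec n.
Hypothesis y_step : forall k, T (x k) (y (S k)).
Hypothesis z_step : forall k, z (S k) = vsub (x k) (vscale s (gradw (x k))).
Hypothesis x_step : forall k,
  x (S k) = vadd (vscale (alpha (S k)) (z (S k))) (vscale (1 - alpha (S k)) (y (S k))).

Variable xs : Vec n.
Hypothesis xs_in_C : C xs.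
Hypothesis xs_vi : forall u, C u -> dot (gradw xs) (vsub u xs) >= 0.

Lemma iterates_bounded : exists R0, forall k,
  norm (vsub (x k) xs) <= R0 /\ norm (vsub (z (S k)) xs) <= R0 /\ norm (vsub (y (S k)) xs) <= R0.
Proof.
  set (Sxs := vsub xs (vscale s (gradw xs))).
  (* the ball of radius R0 around xs is mapped into itself by T and by S *)
  set (R0 := Rmax (norm (vsub (x 0%nat) xs)) (norm (vsub Sxs xs) / (1 - rho))).
  assert (HR0 : norm (vsub Sxs xs) <= (1 - rho) * R0).
  { pose proof (Rmax_r (norm (vsub (x 0%nat) xs)) (norm (vsub Sxs xs) / (1 - rho))) as H.
    fold R0 in H. apply Rmult_le_compat_l with (r := 1 - rho) in H; [|lra].
    replace ((1 - rho) * (norm (vsub Sxs xs) / (1 - rho))) with (norm (vsub Sxs xs)) in H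
      by (field; lra).
    exact H. }
  assert (Hz : forall k, norm (vsub (x k) xs) <= R0 -> norm (vsub (z (S k)) xs) <= R0).
  { intros k Hk. rewrite z_step. eapply Rle_trans; [apply (dist_triangle n _ Sxs _)|].
    pose proof (S_contraction (x k) xs) as HS. fold Sxs in HS.
    assert (rho * norm (vsub (x k) xs) <= rho * R0) by (apply Rmult_le_compat_l; lra). lra. }
  assert (Hy : forall k, norm (vsub (x k) xs) <= R0 -> norm (vsub (y (S k)) xs) <= R0).
  { intros k Hk. eapply Rle_trans; [|exact Hk].
    exact (T_nonexpansive _ _ _ _ (y_step k) (T_fixed xs xs_in_C)). }
  assert (Hx : forall k, norm (vsub (x k) xs) <= R0).
  { induction k as [|k IH]; [apply Rmax_l|].
    rewrite x_step.
    replace (vsub (vadd (vscale (alpha (S k)) (z (S k))) (vscale (1 - alpha (S k)) (y (S k)))) xs)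
      with (vadd (vscale (alpha (S k)) (vsub (z (S k)) xs))
                 (vscale (1 - alpha (S k)) (vsub (y (S k)) xs))) by vec_ring.
    destruct (alpha_range k).
    eapply Rle_trans; [apply norm_comb; lra|].
    specialize (Hz k IH). specialize (Hy k IH). nra. }
  exists R0. intros k. auto.
Qed.

Lemma z_minus_y_bounded : exists M, 0 <= M /\ forall k, norm (vsub (z (S k)) (y (S k))) <= M.
Proof.
  destruct iterates_bounded as [R0 HR0]. exists (2 * R0). split.
  - destruct (HR0 O) as [H _]. pose proof (norm_ge0 n (vsub (x O) xs)). lra.
  - intros k. destruct (HR0 k) as [_ [Hz Hy]].
    eapply Rle_trans; [apply (dist_triangle n _ xs _)|]. rewrite (dist_comm n xs). lra.
Qed.

Lemma consecutive_steps M : (forall k, norm (vsub (z (S k)) (y (S k))) <= M) -> forall k,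
  norm (vsub (x (S (S k))) (x (S k)))
  <= (1 - (1 - rho) * alpha (S (S k))) * norm (vsub (x (S k)) (x k))
     + Rabs (alpha (S (S k)) - alpha (S k)) * M.
Proof.
  intros HM k. set (a1 := alpha (S (S k))). set (a0 := alpha (S k)).
  replace (vsub (x (S (S k))) (x (S k)))
    with (vadd (vadd (vscale a1 (vsub (z (S (S k))) (z (S k))))
                     (vscale (1 - a1) (vsub (y (S (S k))) (y (S k)))))
               (vscale (a1 - a0) (vsub (z (S k)) (y (S k)))))
    by (rewrite (x_step (S k)), (x_step k); fold a1 a0; vec_ring).
  destruct (alpha_range (S k)) as [Ha1 Ha1']. fold a1 in Ha1, Ha1'.
  eapply Rle_trans; [apply norm_triangle|]. rewrite (normZ n (a1 - a0)).
  pose proof (norm_comb n a1 (1 - a1) (vsub (z (S (S k))) (z (S k)))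
                (vsub (y (S (S k))) (y (S k))) ltac:(lra) ltac:(lra)).
  assert (Hzz : norm (vsub (z (S (S k))) (z (S k))) <= rho * norm (vsub (x (S k)) (x k)))
    by (rewrite !z_step; apply S_contraction).
  assert (Hyy : norm (vsub (y (S (S k))) (y (S k))) <= norm (vsub (x (S k)) (x k)))
    by (apply T_nonexpansive; auto).
  pose proof (HM k). pose proof (Rabs_pos (a1 - a0)).
  assert (Rabs (a1 - a0) * norm (vsub (z (S k)) (y (S k))) <= Rabs (a1 - a0) * M)
    by (apply Rmult_le_compat_l; lra).
  nra.
Qed.

Lemma asymptotic_regularity : limsup_nonpos (fun k => norm (vsub (x (S k)) (x k))).
Proof.
  destruct z_minus_y_bounded as [M [HM0 HM]].
  set (b := fun k => norm (vsub (x k) (x (pred k)))).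
  set (gam := fun k => (1 - rho) * alpha (S k)).
  set (del := fun k => M / (1 - rho) * (Rabs (alpha (S k) - alpha k) / alpha (S k))).
  apply (limsup_nonpos_shift b), (xu_lemma b gam del 1).
  - intros k _. destruct (alpha_range k). unfold gam. split; [nra|].
    assert ((1 - rho) * alpha (S k) <= 1 * 1) by (apply Rmult_le_compat; lra). lra.
  - apply cv_infty_sum_scal; auto; lra.
  - intros [|k] Hk; [lia|]. unfold b, gam, del. simpl pred.
    pose proof (consecutive_steps M HM k). destruct (alpha_range (S k)).
    replace ((1 - rho) * alpha (S (S k))
             * (M / (1 - rho) * (Rabs (alpha (S (S k)) - alpha (S k)) / alpha (S (S k)))))
      with (Rabs (alpha (S (S k)) - alpha (S k)) * M) by (field; lra).
    lra.
  - apply limsup_nonpos_scale; [apply Rmult_le_pos; [lra|left; apply Rinv_0_lt_compat; lra]|].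
    apply ratio_to_one_relative_increment; [intros; apply alpha_range|auto].
Qed.

Lemma x_minus_y_vanishes : limsup_nonpos (fun k => norm (vsub (x k) (y (S k)))).
Proof.
  destruct z_minus_y_bounded as [M [HM0 HM]].
  intros eps He. destruct (asymptotic_regularity (eps / 2)) as [N1 HN1]; [lra|].
  destruct (alpha_lim (eps / (2 * (M + 1)))) as [N2 HN2]; [apply Rdiv_lt_0_compat; lra|].
  exists (N1 + N2)%nat. intros k Hk. specialize (HN1 k ltac:(lia)). specialize (HN2 (S k) ltac:(lia)).
  unfold Rdist in HN2. rewrite Rminus_0_r in HN2.
  eapply Rle_trans; [apply (dist_triangle n _ (x (S k)) _)|]. rewrite (dist_comm n (x k)).
  replace (vsub (x (S k)) (y (S k))) with (vscale (alpha (S k)) (vsub (z (S k)) (y (S k))))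
    by (rewrite x_step; vec_ring).
  rewrite normZ. pose proof (HM k).
  assert (Rabs (alpha (S k)) * norm (vsub (z (S k)) (y (S k))) <= eps / (2 * (M + 1)) * M)
    by (apply Rmult_le_compat; try lra; [apply Rabs_pos|apply norm_ge0]).
  assert (eps / (2 * (M + 1)) * M <= eps / 2).
  { apply Rmult_le_reg_r with (2 * (M + 1)); [lra|]. field_simplify; nra. }
  lra.
Qed.

Lemma cluster_point_in_C (phi : nat -> nat) l : (forall j, (phi j < phi (S j))%nat) ->
  vconverges (fun j => x (phi j)) l -> C l.
Proof.
  intros Hi Hc. apply (T_demiclosed (fun j => x (phi j)) (fun j => y (S (phi j))) l Hc);
    [|intros; apply y_step].
  apply (vconverges_close n _ _ l Hc). intros e He. destruct (x_minus_y_vanishes e He) as [N HN].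
  exists N. intros k Hk. apply HN. pose proof (strict_incr_ge _ Hi k). lia.
Qed.

Lemma vi_liminf : limsup_nonpos (fun k => - dot (gradw xs) (vsub (x k) xs)).
Proof.
  intros eps He. apply NNPP. intro Hn.
  assert (HP : forall N, exists k, (N <= k)%nat /\ dot (gradw xs) (vsub (x k) xs) < - eps).
  { intros N. apply NNPP. intro Hn2. apply Hn. exists N. intros k Hk.
    apply Rnot_lt_le. intro. apply Hn2. exists k. split; auto. lra. }
  destruct iterates_bounded as [R0 HR0].
  assert (HB : forall k, norm (x k) <= norm xs + R0).
  { intros k. destruct (HR0 k) as [Hk _].
    replace (x k) with (vadd (vsub (x k) xs) xs) by vec_ring.
    pose proof (norm_triangle n (vsub (x k) xs) xs). lra. }
  destruct (bolzano_weierstrass_vec n x _ _ HB HP) as [phi [xb [Hi [HPp Hc]]]].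
  pose proof (xs_vi xb (cluster_point_in_C phi xb Hi Hc)) as Hvi.
  destruct (dot_converges n (fun _ => gradw xs) (fun j => vsub (x (phi j)) xs) (gradw xs) (vsub xb xs)
      (vconverges_const n _) (vconverges_sub n _ _ _ _ Hc (vconverges_const n _)) eps He)
    as [N HN].
  specialize (HN N (le_n _)). specialize (HPp N). unfold Rdist in HN.
  pose proof (Rle_abs (- (dot (gradw xs) (vsub (x (phi N)) xs) - dot (gradw xs) (vsub xb xs))))
    as Habs.
  rewrite Rabs_Ropp in Habs. lra.
Qed.

Lemma dist_sq_recursion k :
  dot (vsub (x (S k)) xs) (vsub (x (S k)) xs)
  <= (1 - (1 - rho) * alpha (S k)) * dot (vsub (x k) xs) (vsub (x k) xs)
     + (1 - rho) * alpha (S k) * (2 * s / (1 - rho) * - dot (gradw xs) (vsub (x (S k)) xs)).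
Proof.
  set (al := alpha (S k)). destruct (alpha_range k) as [Hal1 Hal2]. fold al in Hal1, Hal2.
  set (Sxs := vsub xs (vscale s (gradw xs))).
  (* split off the part of x (S k) - xs that is a contraction of x k - xs *)
  set (A := vadd (vscale al (vsub (z (S k)) Sxs)) (vscale (1 - al) (vsub (y (S k)) xs))).
  set (B := vscale al (vscale (- s) (gradw xs))).
  assert (EAB : vsub (x (S k)) xs = vadd A B) by (rewrite x_step; fold al; unfold A, B, Sxs; vec_ring).
  set (nk := norm (vsub (x k) xs)).
  assert (HA : norm A <= (1 - (1 - rho) * al) * nk).
  { unfold A. eapply Rle_trans; [apply norm_comb; lra|].
    assert (norm (vsub (z (S k)) Sxs) <= rho * nk) by (rewrite z_step; apply S_contraction).
    assert (norm (vsub (y (S k)) xs) <= nk) by (apply T_nonexpansive; auto).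
    nra. }
  pose proof (dot_self_add_le n A B) as HAB. rewrite <- EAB in HAB.
  assert (HB : dot B (vsub (x (S k)) xs) = al * (- s) * dot (gradw xs) (vsub (x (S k)) xs))
    by (unfold B; rewrite !dot_scalel; ring).
  pose proof (norm_ge0 n A). pose proof (norm_ge0 n (vsub (x k) xs)). fold nk in H0.
  rewrite <- (norm_pow2 n A) in HAB. rewrite <- (norm_pow2 n (vsub (x k) xs)). fold nk.
  assert (Hc : 0 <= 1 - (1 - rho) * al <= 1).
  { split; [|nra]. assert ((1 - rho) * al <= 1 * 1) by (apply Rmult_le_compat; lra). lra. }
  assert (norm A ^ 2 <= (1 - (1 - rho) * al) * nk ^ 2).
  { apply Rle_trans with (((1 - (1 - rho) * al) * nk) ^ 2); [apply pow_incr; lra|].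
    rewrite Rpow_mult_distr. apply Rmult_le_compat_r; [apply pow2_ge_0|nra]. }
  replace ((1 - rho) * al * (2 * s / (1 - rho) * - dot (gradw xs) (vsub (x (S k)) xs)))
    with (2 * (al * (- s) * dot (gradw xs) (vsub (x (S k)) xs))) by (field; lra).
  lra.
Qed.

Lemma bigsam_converges : vconverges x xs.
Proof.
  set (a := fun k => dot (vsub (x k) xs) (vsub (x k) xs)).
  assert (Ha : limsup_nonpos a).
  { apply (xu_lemma a (fun k => (1 - rho) * alpha (S k))
             (fun k => 2 * s / (1 - rho) * - dot (gradw xs) (vsub (x (S k)) xs)) O).
    - intros k _. destruct (alpha_range k). split; [nra|].
      assert ((1 - rho) * alpha (S k) <= 1 * 1) by (apply Rmult_le_compat; lra). lra.
    - apply cv_infty_sum_scal; auto; lra.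
    - intros k _. apply dist_sq_recursion.
    - apply limsup_nonpos_scale; [apply Rmult_le_pos; [lra|left; apply Rinv_0_lt_compat; lra]|].
      apply (limsup_nonpos_shift (fun k => - dot (gradw xs) (vsub (x k) xs))), vi_liminf. }
  intros eps He. destruct (Ha (eps ^ 2 / 2)) as [N HN]; [nra|].
  exists N. intros k Hk. specialize (HN k Hk).
  apply norm_lt_of_dot; [lra|]. unfold a in HN. nra.
Qed.

End BigSam.

Theorem proposition3p1
  (n : nat)
  (* Assumption (A) *)
  (f : Vec n -> R) (gradf : Vec n -> Vec n) (Lf : R)
  (g : Vec n -> ER)
  (Hf_conv : convex f) (Hf_grad : is_gradient f gradf)
  (HLf_pos : 0 < Lf) (Hf_lip : lipschitz Lf gradf)
  (Hg_proper : proper g) (Hg_lsc : lsc g) (Hg_conv : ext_convex g)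
  (HXstar : exists x, in_Xstar f g x)
  (* Assumption (B) *)
  (omega : Vec n -> R) (gradw : Vec n -> Vec n) (sigma Lw : R)
  (Hsigma : 0 < sigma) (Hw_sc : strongly_convex sigma omega)
  (Hw_grad : is_gradient omega gradw) (Hw_lip : lipschitz Lw gradw)
  (* Assumption (C) *)
  (alpha : nat -> R)
  (Ha_range : forall k, (1 <= k)%nat -> 0 < alpha k <= 1)
  (Ha_lim : Un_cv alpha 0)
  (Ha_sum : cv_infty (fun N => sum_f_R0 (fun k => alpha (S k)) N))
  (Ha_ratio : Un_cv (fun k => alpha (S k) / alpha k) 1)
  (* step sizes *)
  (t s : R) (Ht : 0 < t <= 1 / Lf) (Hs : 0 < s <= 2 / (Lw + sigma))
  (* BiG-SAM iterates, starting from an arbitrary x^0 = x 0 *)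
  (x y z : nat -> Vec n)
  (Hy : forall k, is_prox t g (vsub (x k) (vscale t (gradf (x k)))) (y (S k)))
  (Hz : forall k, z (S k) = vsub (x k) (vscale s (gradw (x k))))
  (Hx : forall k, x (S k) = vadd (vscale (alpha (S k)) (z (S k)))
                                 (vscale (1 - alpha (S k)) (y (S k)))) :
  exists xs : Vec n,
    in_Xstar f g xs /\
    vconverges x xs /\
    (forall u, in_Xstar f g u -> dot (gradw xs) (vsub u xs) >= 0) /\
    (* consequently xs is the unique minimizer of omega over X^* *)
    (forall u, in_Xstar f g u -> omega xs <= omega u) /\
    (forall v, in_Xstar f g v -> (forall u, in_Xstar f g u -> omega v <= omega u) -> v = xs).
Proof.
  destruct Ht as [Ht0 HtL].
  set (T := fun a p => prox_vi t g (vsub a (vscale t (gradf a))) p).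
  assert (T_fixed : forall u, in_Xstar f g u -> T u u)
    by (intros; apply (Xstar_prox_grad_fixed n t f gradf Lf); auto).
  assert (T_demiclosed : forall a p l, vconverges a l -> vconverges p l ->
                           (forall j, T (a j) (p j)) -> in_Xstar f g l)
    by (intros a p l Ha Hp Hap; exact (prox_grad_demiclosed n f gradf Lf g t a p l
                                         Ht0 Hf_conv Hf_grad Hf_lip Hg_lsc Ha Hp Hap)).
  destruct (gradient_step_contraction n omega gradw sigma Lw s Hsigma Hw_sc Hw_grad Hw_lip Hs)
    as [rho [Hrho HS]].
  destruct (strongly_convex_min_exists n (in_Xstar f g) sigma omega gradw) as [xs [Hxs Hmin]];
    auto.
  { intros u l Hu Hl. exact (T_demiclosed u u l Hl Hl (fun j => T_fixed _ (Hu j))). }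
  assert (Hvi : forall u, in_Xstar f g u -> dot (gradw xs) (vsub u xs) >= 0).
  { apply (min_convex_set_vi n _ omega gradw Lw); auto. apply Xstar_convex; auto. }
  exists xs. repeat split; auto.
  - apply (bigsam_converges n (in_Xstar f g) T) with (gradw := gradw) (s := s) (rho := rho)
      (alpha := alpha) (y := y) (z := z); auto.
    + apply (prox_grad_nonexpansive n f gradf Lf t g); auto.
    + lra.
    + intros k. apply Ha_range. lia.
    + intros k. apply is_prox_vi; auto.
  - intros v Hv Hvm. apply (vi_point_unique_min n (in_Xstar f g) sigma omega gradw); auto.
Qed.
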